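(* For all integers $m,n\ge 2$, we have $\operatorname{BSR}(m,n)\ge z_2(m,n)\ge z(m,n)$.
   Context: An $m\times n$ biquadratic form is a polynomial $P(\mathbf{x},\mathbf{y})=\sum_{i,k=1}^m\sum_{j,l=1}^n a_{ijkl}x_ix_ky_jy_l$ with real coefficients, $\mathbf{x}\in\mathbb{R}^m$, $\mathbf{y}\in\mathbb{R}^n$. It is SOS if $P=\sum_{p=1}^r f_p^2$ for some bilinear forms $f_p(\mathbf{x},\mathbf{y})=\sum_{i,j}c^{(p)}_{ij}x_iy_j$; the least such $r$ is the SOS rank $\operatorname{sos}(P)$. $\operatorname{BSR}(m,n)$ is the maximum of $\operatorname{sos}(P)$ over all $m\times n$ SOS biquadratic forms $P$. The Zarankiewicz number $z(m,n)$ is the maximum number of edges of a bipartite graph with parts $[m]=\{1,\dots,m\}$ and $[n]$ containing no 4-cycle $C_4$ (equivalently, the maximum size of a set of cells of the $m\times n$ grid containing no four cells $(i,j),(i,l),(k,j),(k,l)$ with $i\ne k$, $j\ne l$). Double Zarankiewicz number: consider configurations $G=([m],[n],E_1\cup E_2)$ where $E_1\subseteq[m]\times[n]$ is a set of 1-edges (cells) and $E_2$ is a set of 2-edges $(i,j;k,l)$ with $i,k\in[m]$, $j,l\in[n]$, $i\ne k$, $j\ne l$; the cells $(i,j)$ and $(k,l)$ are the two halves of this 2-edge. Simplicity condition: the halves of all 2-edges are pairwise distinct cells and none of them belongs to $E_1$. A cell is occupied if it lies in $E_1$ or is a half of some 2-edge. $G$ contains a generalized $C_4$-cycle if (1) there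 are four 1-edges $(i,j),(i,l),(k,j),(k,l)\in E_1$ with $i\ne k$, $j\ne l$; or (2) there is a 2-edge $(i,j;k,l)\in E_2$ whose two opposite cells $(i,l)$ and $(k,j)$ are both occupied; or (3) there are a 2-edge $(i,j;p,q)\in E_2$ and a cell $(k,l)$ such that the five cells $(k,l),(k,j),(k,q),(i,l),(p,l)$ are pairwise distinct and all occupied. $z_2(m,n)$ is the maximum of $|E_1|+|E_2|$ over all such $G$ satisfying the simplicity condition and containing no generalized $C_4$-cycle. *)

From HB Require Import structures.
From mathcomp Require Import all_boot all_order all_algebra.
From mathcomp Require Import boolp classical_sets reals constructive_ereal ereal.
Set Implicit Arguments. Unset Strict Implicit. Unset Printing Implicit Defensive.
Import Order.TTheory GRing.Theory Num.Theory.
Local Open Scope ring_scope.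
Local Open Scope classical_set_scope.

Section Biquadratic.
Variables (R : realType) (m n : nat).

Definition bq_coeffs := 'I_m -> 'I_n -> 'I_m -> 'I_n -> R.

Definition bq_eval (a : bq_coeffs) (x : 'I_m -> R) (y : 'I_n -> R) : R :=
  \sum_(i < m) \sum_(k < m) \sum_(j < n) \sum_(l < n) a i j k l * x i * x k * y j * y l.

Definition bil_eval (c : 'I_m -> 'I_n -> R) (x : 'I_m -> R) (y : 'I_n -> R) : R :=
  \sum_(i < m) \sum_(j < n) c i j * x i * y j.

(* P is a sum of r squares of bilinear forms (identity of real polynomials,
   checked as identity of polynomial functions on R^m x R^n) *)
Definition sos_with (a : bq_coeffs) (r : nat) : Prop :=
  exists c : 'I_r -> 'I_m -> 'I_n -> R,
    forall x y, bq_eval a x y = \sum_(p < r) (bil_eval (c p) x y) ^+ 2.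

Definition is_sos (a : bq_coeffs) : Prop := exists r, sos_with a r.

(* sos(P) = least r (as an extended real; a natural number whenever P is SOS) *)
Definition sos_rank (a : bq_coeffs) : \bar R :=
  ereal_inf [set (r%:R)%:E | r in [set r | sos_with a r]].

(* BSR(m,n) = max of sos(P) over all m x n SOS biquadratic forms
   (defined as the supremum, which is this maximum) *)
Definition BSR : \bar R := ereal_sup [set sos_rank a | a in [set a | is_sos a]].
End Biquadratic.

Section Zarankiewicz.
Variables (m n : nat).
Definition cell := ('I_m * 'I_n)%type.

Definition has_C4 (E1 : {set cell}) : bool :=
  [exists i : 'I_m, exists k : 'I_m, exists j : 'I_n, exists l : 'I_n,
    [&& i != k, j != l, (i, j) \in E1, (i, l) \in E1, (k, j) \in E1 & (k, l) \in E1]].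

Definition z : nat := \max_(E : {set cell} | ~~ has_C4 E) #|E|.

(* a 2-edge (i,j;k,l) is the ordered pair of its halves ((i,j),(k,l)) with i<>k, j<>l *)
Definition is_2edge (e : cell * cell) : bool := (e.1.1 != e.2.1) && (e.1.2 != e.2.2).

Definition occupied (E1 : {set cell}) (E2 : {set cell * cell}) (c : cell) : bool :=
  (c \in E1) || [exists e in E2, (c == e.1) || (c == e.2)].

Definition simple_conf (E1 : {set cell}) (E2 : {set cell * cell}) : bool :=
  [forall e in E2, [&& is_2edge e, e.1 \notin E1 & e.2 \notin E1]] &&
  [forall e in E2, forall e' in E2,
     (e != e') ==> [&& e.1 != e'.1, e.1 != e'.2, e.2 != e'.1 & e.2 != e'.2]].

Definition has_gen_C4 (E1 : {set cell}) (E2 : {set cell * cell}) : bool :=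
  [|| has_C4 E1,
      (* (2): 2-edge (i,j;k,l) with (i,l) and (k,j) occupied *)
      [exists e in E2,
         occupied E1 E2 (e.1.1, e.2.2) && occupied E1 E2 (e.2.1, e.1.2)]
    | (* (3): 2-edge (i,j;p,q) and cell (k,l) with the five cells
         (k,l),(k,j),(k,q),(i,l),(p,l) pairwise distinct and occupied *)
      [exists e in E2, exists c : cell,
         let: ((i, j), (p, q)) := e in let: (k, l) := c in
         let s := [:: (k, l); (k, j); (k, q); (i, l); (p, l)] in
         uniq s && all (occupied E1 E2) s]].

Definition z2 : nat :=
  \max_(G : {set cell} * {set cell * cell} |
          simple_conf G.1 G.2 && ~~ has_gen_C4 G.1 G.2) (#|G.1| + #|G.2|).
End Zarankiewicz.

(* Let (E1, E2) be a configuration without generalized C4 and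
     P = sum_((i,j) in E1) (x_i y_j)^2 + sum_((i,j;k,l) in E2) (x_i y_j + x_k y_l)^2.
   In any representation of P as a sum of r squares of bilinear forms, let w_(i,j) in R^r
   collect the coefficients of x_i y_j.  Evaluating P at 0/1 vectors supported on two rows
   and two columns determines |w_u|^2, the products <w_u, w_v> for u, v in a common row or
   column, and the sums <w_(i,j), w_(k,l)> + <w_(i,l), w_(k,j)>.  The three forbidden
   patterns force from these data that the whole Gram matrix of the w_u is the one of the
   displayed representation: w_u = 0 on unoccupied cells, the two halves of a 2-edge carry
   the same vector, and all other products vanish.  The cells of E1 together with one half
   of each 2-edge thus give |E1| + |E2| orthonormal vectors in R^r.  Taking E2 empty shows
   z <= z2. *)

From mathcomp Require Import all_boot all_order all_algebra.
From mathcomp Require Import boolp classical_sets reals constructive_ereal ereal.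
From mathcomp Require Import ring lra.
Import Order.TTheory GRing.Theory Num.Theory.
Local Open Scope ring_scope.
Set Implicit Arguments. Unset Strict Implicit. Unset Printing Implicit Defensive.

Section GramMatrix.
Variables (R : realType) (m n : nat) (I : finType).
Implicit Types (c : I -> 'I_m -> 'I_n -> R) (u v : cell m n).

Definition sos_eval c x y := \sum_(p : I) (bil_eval (c p) x y) ^+ 2.

Definition gram c u v := \sum_(p : I) c p u.1 u.2 * c p v.1 v.2.

Definition gram_coeffs c : bq_coeffs R m n := fun i j k l => gram c (i, j) (k, l).

Lemma gramC c u v : gram c u v = gram c v u.
Proof. by apply: eq_bigr => p _; rewrite mulrC. Qed.

Lemma gram_eq0 c u : gram c u u = 0 -> forall p, c p u.1 u.2 = 0.
Proof.
move=> /eqP; rewrite psumr_eq0 => [/allP u0 p|p _]; last by rewrite -expr2 sqr_ge0.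
by have /implyP/(_ isT) := u0 p (mem_index_enum p); rewrite mulf_eq0 orbb => /eqP.
Qed.

Lemma gram_eq_coef c u v : gram c u u + gram c v v = 2 * gram c u v ->
  forall p, c p u.1 u.2 = c p v.1 v.2.
Proof.
move=> guv; have dist0 : \sum_(p : I) (c p u.1 u.2 - c p v.1 v.2) ^+ 2 = 0.
  transitivity (gram c u u + gram c v v - 2 * gram c u v); last by rewrite guv subrr.
  by rewrite /gram mulr_sumr -big_split -sumrB; apply: eq_bigr => p _ /=; ring.
move=> p; apply/eqP; rewrite -subr_eq0 -sqrf_eq0; apply/eqP; move: p isT.
by apply: psumr_eq0P dist0 => p _; rewrite sqr_ge0.
Qed.

Lemma bq_eval_gram c x y : bq_eval (gram_coeffs c) x y = sos_eval c x y.
Proof.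
transitivity (\sum_(p : I) \sum_(i < m) \sum_(k < m) \sum_(j < n) \sum_(l < n)
   (c p i j * x i * y j) * (c p k l * x k * y l)).
  rewrite /bq_eval; do 4![rewrite [RHS]exchange_big; apply: eq_bigr => ? _].
  by rewrite /gram_coeffs /gram !mulr_suml; apply: eq_bigr => p _; ring.
apply: eq_bigr => p _; rewrite expr2 /bil_eval big_distrlr; apply: eq_bigr => i _.
by apply: eq_bigr => k _; rewrite big_distrlr.
Qed.

Lemma gram_is_sos c : is_sos (gram_coeffs c).
Proof.
exists #|[pred p : I | true]|; exists (fun p => c (enum_val p)) => x y.
by rewrite bq_eval_gram; exact: (big_enum_val (A := [pred p : I | true])).
Qed.

End GramMatrix.

Section IndicatorVectors.
Variables (R : realType) (m n : nat).

Definition ind2 k (i i' : 'I_k) : 'I_k -> R := fun t => ((t == i) || (t == i'))%:R.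

Lemma sum_ind2 k (i i' : 'I_k) (F : 'I_k -> R) :
  \sum_(t < k) ind2 i i' t * F t = F i + (i != i')%:R * F i'.
Proof.
rewrite (bigD1 i) //= /ind2 eqxx mul1r; congr (_ + _).
have [<-|ii'] := eqVneq i i'.
  by rewrite mul0r big1 // => t /negbTE ->; rewrite mul0r.
rewrite (bigD1 i') 1?eq_sym //= eqxx orbT !mul1r big1 ?addr0 // => t /andP[ti ti'].
by rewrite (negbTE ti) (negbTE ti') mul0r.
Qed.

Lemma bil_eval_ind2 (C : 'I_m -> 'I_n -> R) i k j l :
  bil_eval C (ind2 i k) (ind2 j l) =
  C i j + (j != l)%:R * C i l + (i != k)%:R * (C k j + (j != l)%:R * C k l).
Proof.
transitivity (\sum_(t < m) ind2 i k t * \sum_(s < n) ind2 j l s * C t s).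
  by apply: eq_bigr => t _; rewrite mulr_sumr; apply: eq_bigr => s _; ring.
by rewrite !sum_ind2.
Qed.

Variable I : finType.
Implicit Type c : I -> 'I_m -> 'I_n -> R.

Lemma sos_eval_ind11 c i j : sos_eval c (ind2 i i) (ind2 j j) = gram c (i, j) (i, j).
Proof.
by apply: eq_bigr => p _; rewrite bil_eval_ind2 !eqxx !mul0r !addr0 expr2.
Qed.

Lemma sos_eval_ind12 c i j l : j != l ->
  sos_eval c (ind2 i i) (ind2 j l) =
  gram c (i, j) (i, j) + gram c (i, l) (i, l) + 2 * gram c (i, j) (i, l).
Proof.
move=> jl; rewrite /gram mulr_sumr -!big_split; apply: eq_bigr => p _ /=.
by rewrite bil_eval_ind2 jl eqxx /= mul0r addr0 mul1r; ring.
Qed.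

Lemma sos_eval_ind21 c i k j : i != k ->
  sos_eval c (ind2 i k) (ind2 j j) =
  gram c (i, j) (i, j) + gram c (k, j) (k, j) + 2 * gram c (i, j) (k, j).
Proof.
move=> ik; rewrite /gram mulr_sumr -!big_split; apply: eq_bigr => p _ /=.
by rewrite bil_eval_ind2 ik eqxx /= !mul0r !addr0 mul1r; ring.
Qed.

Lemma sos_eval_ind22 c i k j l : i != k -> j != l ->
  sos_eval c (ind2 i k) (ind2 j l) =
  gram c (i, j) (i, j) + gram c (i, l) (i, l) + gram c (k, j) (k, j) + gram c (k, l) (k, l) +
  2 * (gram c (i, j) (i, l) + gram c (i, j) (k, j) + gram c (i, j) (k, l) +
       gram c (i, l) (k, j) + gram c (i, l) (k, l) + gram c (k, j) (k, l)).
Proof.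
move=> ik jl; rewrite /gram -!big_split mulr_sumr -!big_split; apply: eq_bigr => p _ /=.
by rewrite bil_eval_ind2 ik jl /= !mul1r; ring.
Qed.

End IndicatorVectors.

Section Polarization.
Variables (R : realType) (m n : nat) (I J : finType).
Variables (c : I -> 'I_m -> 'I_n -> R) (d : J -> 'I_m -> 'I_n -> R).
Hypothesis sos_cd : forall x y, sos_eval c x y = sos_eval d x y.

Lemma gram_eq_diag u : gram c u u = gram d u u.
Proof. by case: u => i j; rewrite -!sos_eval_ind11 sos_cd. Qed.

Lemma gram_eq_row i j l : j != l -> gram c (i, j) (i, l) = gram d (i, j) (i, l).
Proof.
move=> jl; have := sos_cd (ind2 R i i) (ind2 R j l).
by rewrite !sos_eval_ind12 // !gram_eq_diag; lra.
Qed.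

Lemma gram_eq_col i k j : i != k -> gram c (i, j) (k, j) = gram d (i, j) (k, j).
Proof.
move=> ik; have := sos_cd (ind2 R i k) (ind2 R j j).
by rewrite !sos_eval_ind21 // !gram_eq_diag; lra.
Qed.

Lemma gram_eq_cross i k j l : i != k -> j != l ->
  gram c (i, j) (k, l) + gram c (i, l) (k, j) = gram d (i, j) (k, l) + gram d (i, l) (k, j).
Proof.
move=> ik jl; have := sos_cd (ind2 R i k) (ind2 R j l).
rewrite !sos_eval_ind22 // !gram_eq_diag !gram_eq_row // !gram_eq_col //; lra.
Qed.

End Polarization.

Lemma orthonormal_card_le (F : fieldType) (T : finType) r (w : T -> 'I_r -> F)
    (S : {set T}) :
  {in S &, forall u v, \sum_(p < r) w u p * w v p = (u == v)%:R} -> (#|S| <= r)%N.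
Proof.
move=> ortho; pose M : 'M[F]_(#|S|, r) := \matrix_(s, p) w (enum_val s) p.
have MMt : M *m M^T = 1%:M.
  apply/matrixP => s t; rewrite !mxE; under eq_bigr do rewrite !mxE.
  by rewrite ortho ?enum_valP // (inj_eq enum_val_inj).
have := mxrankM_maxl M M^T; rewrite MMt mxrank1 => /leq_trans; apply.
exact: rank_leq_col.
Qed.

Lemma sumr_indicator_le1 (R : numDomainType) (T : finType) (P : pred T) :
  {in P &, forall x y, x = y} -> \sum_(x : T) ((P x)%:R : R) = [exists x, P x]%:R.
Proof.
move=> P_le1; have [[x Px]|/existsPn noP] := altP existsP; last first.
  by rewrite big1 // => x _; rewrite (negbTE (noP x)).
rewrite (bigD1 x) //= Px big1 ?addr0 // => y yx.
by apply/eqP; rewrite pnatr_eq0 eqb0; apply: contra yx => Py; rewrite (P_le1 y x).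
Qed.

Section SosRank.
Variables (R : realType) (m n : nat) (a : bq_coeffs R m n).

Lemma sos_rank_le_BSR : is_sos a -> (sos_rank a <= BSR R m n)%E.
Proof. by move=> sos_a; apply: ereal_sup_ubound; exists a. Qed.

Lemma sos_rank_ge N : (forall r, sos_with a r -> N <= r)%N -> ((N%:R)%:E <= sos_rank a)%E.
Proof. by move=> ge_N; apply/ereal_infP => _ [r /ge_N Nr <-]; rewrite lee_fin ler_nat. Qed.

End SosRank.

Section Configuration.
Variables (R : realType) (m n : nat) (E1 : {set cell m n}) (E2 : {set cell m n * cell m n}).
Hypothesis conf_simple : simple_conf E1 E2.
Hypothesis conf_free : ~~ has_gen_C4 E1 E2.
Local Notation occ := (occupied E1 E2).
Implicit Types (u v w : cell m n) (e : cell m n * cell m n).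

Definition half u e := (u == e.1) || (u == e.2).

Definition two_edge u v := ((u, v) \in E2) || ((v, u) \in E2).

Definition linked u v := ((u == v) && (u \in E1)) || [exists e in E2, half u e && half v e].

Lemma half_pair u v e : half u e -> half v e -> u != v -> e = (u, v) \/ e = (v, u).
Proof.
case: e => a b; rewrite /half /=.
by case/orP => /eqP ->; case/orP => /eqP ->; rewrite ?eqxx //; [left | right].
Qed.

Lemma edge_2edge e : e \in E2 -> is_2edge e.
Proof. by case/andP: conf_simple => /forall_inP /(_ e) h _ /h /and3P []. Qed.

Lemma half_notin_E1 u e : e \in E2 -> half u e -> u \notin E1.
Proof.
case/andP: conf_simple => /forall_inP h _ /h /and3P [_ e1 e2].
by case/orP => /eqP ->.
Qed.

Lemma half_uniq u e e' : e \in E2 -> e' \in E2 -> half u e -> half u e' -> e = e'.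
Proof.
case/andP: conf_simple => _ /forall_inP h He He' hu hu'; apply/eqP; apply: contraT => ee'.
move: (forall_inP (h e He) e' He') => /implyP /(_ ee').
by case/orP: hu hu' => /eqP <- /orP [] /eqP <-; rewrite eqxx ?andbF.
Qed.

Lemma occupied_half u e : e \in E2 -> half u e -> occ u.
Proof. by move=> He hu; apply/orP; right; apply/existsP; exists e; rewrite He. Qed.

Lemma two_edgeC u v : two_edge u v = two_edge v u.
Proof. exact: orbC. Qed.

Lemma two_edge_coords u v : two_edge u v -> (u.1 != v.1) && (u.2 != v.2).
Proof.
case/orP => /edge_2edge /andP [/= h1 h2]; first by rewrite h1 h2.
by rewrite eq_sym h1 eq_sym h2.
Qed.

Lemma two_edge_occupied u v : two_edge u v -> occ u.
Proof.
by case/orP => He; apply: (occupied_half He); rewrite /half eqxx ?orbT.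
Qed.

Lemma occupied_two_edge u : occ u -> u \notin E1 -> exists v, two_edge u v.
Proof.
case/orP => [-> //|/existsP [[a b] /andP [He /orP [] /eqP /= ->]]] _.
  by exists b; rewrite /two_edge He.
by exists a; rewrite /two_edge He orbT.
Qed.

Lemma linkedxx u : linked u u = occ u.
Proof. by rewrite /linked eqxx; congr orb; apply: eq_existsb => e; rewrite andbb. Qed.

Lemma linkedC u v : linked u v = linked v u.
Proof.
rewrite /linked eq_sym; have [->|_] //= := eqVneq v u.
by apply: eq_existsb => e; rewrite (andbC (half u e)).
Qed.

Lemma linked_occupied u v : linked u v -> occ u.
Proof.
case/orP => [/andP [_ uE1]|/existsP [e /andP [He /andP [hu _]]]].
  by rewrite /occupied uE1.
exact: occupied_half He hu.
Qed.

Lemma linked_unoccupied u v : ~~ occ u -> linked u v = false.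
Proof. by move=> u0; apply: contraNF u0; apply: linked_occupied. Qed.

Lemma linked_two_edge u v : u != v -> linked u v = two_edge u v.
Proof.
move=> uv; rewrite /linked (negbTE uv) /=; apply/existsP/orP.
  case=> e /andP [He /andP [hu hv]].
  by case: (half_pair hu hv uv) He => -> He; [left | right].
case=> He; first by exists (u, v); rewrite He /half /= !eqxx orbT.
by exists (v, u); rewrite He /half /= !eqxx orbT.
Qed.

Lemma linked_partner u v w : two_edge u v -> linked v w -> linked u w.
Proof.
move=> uv; have [e He [hu hv]] : exists2 e, e \in E2 & half u e /\ half v e.
  case/orP: uv => He; first by exists (u, v); rewrite // /half /= !eqxx ?orbT.
  by exists (v, u); rewrite // /half /= !eqxx ?orbT.
case/orP => [/andP [_ vE1]|/existsP [f /andP [Hf /andP [hv' hw]]]].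
  by move: (half_notin_E1 He hv); rewrite vE1.
rewrite (half_uniq Hf He hv' hv) in hw.
by apply/orP; right; apply/existsP; exists e; rewrite He hu hw.
Qed.

Lemma conf_noC4 : ~~ has_C4 E1.
Proof. by case/norP: conf_free. Qed.

Lemma two_edge_opposite (i k : 'I_m) (j l : 'I_n) :
  two_edge (i, j) (k, l) -> ~~ occ (i, l) || ~~ occ (k, j).
Proof.
case/norP: conf_free => _ /norP [/existsPn opp _].
case/orP => He; first by move: (opp ((i, j), (k, l))); rewrite He -negb_and.
by move: (opp ((k, l), (i, j))); rewrite He /= negb_and orbC.
Qed.

Lemma linked_opposite (i k : 'I_m) (j l : 'I_n) :
  i != k -> occ (i, j) -> occ (k, l) -> ~~ linked (i, l) (k, j).
Proof.
move=> ik oij okl; rewrite linked_two_edge ?xpair_eqE ?negb_and ?ik //.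
by apply/negP => /two_edge_opposite; rewrite oij okl.
Qed.

Lemma five_free (i k p : 'I_m) (j l q : 'I_n) : two_edge (i, j) (p, q) ->
  k != i -> k != p -> l != j -> l != q ->
  ~~ [&& occ (k, l), occ (k, j), occ (k, q), occ (i, l) & occ (p, l)].
Proof.
move=> ijpq ki kp lj lq.
wlog He : i j p q ijpq ki kp lj lq / ((i, j), (p, q)) \in E2 => [oriented|].
  case/orP: (ijpq) => He; first exact: oriented ijpq ki kp lj lq He.
  rewrite two_edgeC in ijpq.
  by apply: contra (oriented _ _ _ _ ijpq kp ki lq lj He) => /and5P [? ? ? ? ?]; apply/and5P.
have /andP [/= ip jq] := edge_2edge He.
case/norP: conf_free => _ /norP [_ /existsPn /(_ ((i, j), (p, q)))].
rewrite He /= => /existsPn /(_ (k, l)); apply: contra => occ5.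
rewrite /= !inE !xpair_eqE !eqxx.
rewrite (negbTE ki) (negbTE kp) (negbTE lj) (negbTE lq) (negbTE ip) (negbTE jq).
by rewrite !andbF /= !andbT.
Qed.

(* Index [inl u] gives x_i y_j for u = (i, j) in E1, index [inr e] gives x_i y_j + x_k y_l
   for e = (i, j; k, l) in E2, and every other index gives the zero form. *)
Definition conf_forms (s : cell m n + cell m n * cell m n) (i : 'I_m) (j : 'I_n) : R :=
  match s with
  | inl u => ((u \in E1) && ((i, j) == u))%:R
  | inr e => ((e \in E2) && half (i, j) e)%:R
  end.

Lemma gram_conf_forms u v : gram conf_forms u v = (linked u v)%:R.
Proof.
rewrite /gram big_sumType /=; case: u v => [i j] [k l] /=.
have -> : \sum_w conf_forms (inl w) i j * conf_forms (inl w) k l =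
          (((i, j) == (k, l)) && ((i, j) \in E1))%:R.
  rewrite (bigD1 (i, j)) //= big1 => [|w wij]; last first.
    by rewrite eq_sym (negbTE wij) andbF mul0r.
  by rewrite eqxx andbT addr0 -natrM mulnb andbA andbb andbC eq_sym.
have -> : \sum_e conf_forms (inr e) i j * conf_forms (inr e) k l =
          [exists e in E2, half (i, j) e && half (k, l) e]%:R.
  under eq_bigr do rewrite /= -natrM mulnb andbACA andbb.
  apply: sumr_indicator_le1 => e f /andP [He /andP [hu _]] /andP [Hf /andP [hu' _]].
  exact: half_uniq He Hf hu hu'.
rewrite /linked; case: (boolP ((i, j) \in E1)) => ijE1; last by rewrite andbF add0r.
rewrite andbT; case: existsP => [[e /andP [He /andP [hu _]]]|_]; last first.
  by rewrite addr0 orbF.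
by move: (half_notin_E1 He hu); rewrite ijE1.
Qed.

Section Rigidity.
Variables (I : finType) (c : I -> 'I_m -> 'I_n -> R).
Hypothesis sos_c : forall x y, sos_eval c x y = sos_eval conf_forms x y.
Local Notation g := (gram c).

Lemma gram_diag u : g u u = (occ u)%:R.
Proof. by rewrite (gram_eq_diag sos_c) gram_conf_forms linkedxx. Qed.

Lemma gram_row i j l : j != l -> g (i, j) (i, l) = (linked (i, j) (i, l))%:R.
Proof. by move=> jl; rewrite (gram_eq_row sos_c) // gram_conf_forms. Qed.

Lemma gram_col i k j : i != k -> g (i, j) (k, j) = (linked (i, j) (k, j))%:R.
Proof. by move=> ik; rewrite (gram_eq_col sos_c) // gram_conf_forms. Qed.

Lemma gram_cross i k j l : i != k -> j != l ->
  g (i, j) (k, l) + g (i, l) (k, j) = (linked (i, j) (k, l))%:R + (linked (i, l) (k, j))%:R.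
Proof. by move=> ik jl; rewrite (gram_eq_cross sos_c) // !gram_conf_forms. Qed.

Lemma gram_unoccupied u v : ~~ occ u -> g u v = 0.
Proof.
move=> u0; have /gram_eq0 cu0 : g u u = 0 by rewrite gram_diag (negbTE u0).
by apply: big1 => p _; rewrite cu0 mul0r.
Qed.

Lemma gram_cross_unoccupied i k j l : i != k -> j != l -> ~~ occ (i, l) || ~~ occ (k, j) ->
  g (i, j) (k, l) = (linked (i, j) (k, l))%:R.
Proof.
move=> ik jl free; have [g0 l0] : g (i, l) (k, j) = 0 /\ linked (i, l) (k, j) = false.
  case/orP: free => u0; first by rewrite gram_unoccupied ?linked_unoccupied.
  by rewrite gramC linkedC gram_unoccupied ?linked_unoccupied.
by have := gram_cross ik jl; rewrite g0 l0 !addr0.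
Qed.

(* By condition (2) the cross relation for the two halves u, v reads <w_u, w_v> = 1, while
   |w_u|^2 = |w_v|^2 = 1. *)
Lemma coef_two_edge u v : two_edge u v -> forall p, c p u.1 u.2 = c p v.1 v.2.
Proof.
case: u v => i j [k l] uv; apply: gram_eq_coef.
have /andP [/= ik jl] := two_edge_coords uv.
rewrite (gram_cross_unoccupied ik jl (two_edge_opposite uv)).
rewrite linked_two_edge ?xpair_eqE ?negb_and ?ik // uv.
rewrite !gram_diag (two_edge_occupied uv).
by rewrite two_edgeC in uv; rewrite (two_edge_occupied uv) mulr1.
Qed.

(* Replace (i, j) by its partner (p, q), which has the same coefficients; in the cross
   relation for (p, q), (k, l) the other product vanishes since, by condition (3), one of
   the cells (p, l), (k, q) is unoccupied. *)
Lemma gram_two_edge_unlinked (i k p : 'I_m) (j l q : 'I_n) : two_edge (i, j) (p, q) ->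
  i != k -> j != l -> occ (i, l) -> occ (k, j) -> occ (k, l) -> ~~ linked (i, j) (k, l) ->
  g (i, j) (k, l) = 0.
Proof.
move=> ijpq ik jl oil okj okl nlinked.
have /andP [/= ip jq] := two_edge_coords ijpq.
have {}nlinked : ~~ linked (p, q) (k, l) := contra (linked_partner ijpq) nlinked.
have -> : g (i, j) (k, l) = g (p, q) (k, l).
  by apply: eq_bigr => t _; rewrite (coef_two_edge ijpq).
have [pk|pk] := eqVneq p k.
  have [ql|ql] := eqVneq q l; first by rewrite pk ql linkedxx okl in nlinked.
  by rewrite pk in nlinked *; rewrite gram_row // (negbTE nlinked).
have [ql|ql] := eqVneq q l.
  by rewrite ql in nlinked *; rewrite gram_col // (negbTE nlinked).
rewrite gram_cross_unoccupied // ?(negbTE nlinked) //.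
have : ~~ [&& occ (k, l), occ (k, j), occ (k, q), occ (i, l) & occ (p, l)].
  by apply: five_free ijpq _ _ _ _; rewrite eq_sym.
by rewrite okl okj oil /= negb_and orbC.
Qed.

(* Four 1-edges would form a C4, so one of the four cells is a half of a 2-edge. *)
Lemma gram_unlinked_cross i k j l : i != k -> j != l ->
  occ (i, j) -> occ (k, l) -> occ (i, l) -> occ (k, j) -> ~~ linked (i, j) (k, l) ->
  g (i, j) (k, l) = 0.
Proof.
move=> ik jl oij okl oil okj nlinked.
have ki : k != i by rewrite eq_sym.
have lj : l != j by rewrite eq_sym.
have := gram_cross ik jl; rewrite (negbTE nlinked) (negbTE (linked_opposite ik oij okl)).
rewrite addr0 => cross.
have [ijE1|/(occupied_two_edge oij) [[p q] ijpq]] := boolP ((i, j) \in E1); last first.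
  exact: gram_two_edge_unlinked ijpq ik jl oil okj okl nlinked.
have [klE1|/(occupied_two_edge okl) [[p q] klpq]] := boolP ((k, l) \in E1); last first.
  by rewrite gramC; apply: (gram_two_edge_unlinked klpq ki lj okj oil oij); rewrite linkedC.
suff : g (i, l) (k, j) = 0 by move=> g0; rewrite g0 addr0 in cross.
have [ilE1|/(occupied_two_edge oil) [[p q] ilpq]] := boolP ((i, l) \in E1); last first.
  exact: gram_two_edge_unlinked ilpq ik lj oij okl okj (linked_opposite ik oij okl).
have [kjE1|/(occupied_two_edge okj) [[p q] kjpq]] := boolP ((k, j) \in E1); last first.
  rewrite gramC; apply: (gram_two_edge_unlinked kjpq ki jl okl oij oil).
  by rewrite linkedC linked_opposite.
case/negP: conf_noC4; apply/existsP; exists i; apply/existsP; exists k.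
by apply/existsP; exists j; apply/existsP; exists l; rewrite ik jl ijE1 klE1 ilE1 kjE1.
Qed.

Lemma gram_rigid u v : g u v = (linked u v)%:R.
Proof.
case: u v => i j [k l].
have [oij|oij] := boolP (occ (i, j)); last by rewrite gram_unoccupied ?linked_unoccupied.
have [okl|okl] := boolP (occ (k, l)); last first.
  by rewrite gramC linkedC gram_unoccupied ?linked_unoccupied.
have [ijkl|ijkl] := eqVneq (i, j) (k, l); first by rewrite -ijkl gram_diag linkedxx.
have [linked_ijkl|nlinked] := boolP (linked (i, j) (k, l)).
  rewrite linked_two_edge // in linked_ijkl.
  have -> : g (i, j) (k, l) = g (k, l) (k, l).
    by apply: eq_bigr => p _; rewrite (coef_two_edge linked_ijkl).
  by rewrite gram_diag okl.
have [ik|ik] := eqVneq i k.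
  rewrite ik in ijkl nlinked *; have jl : j != l by apply: contraNneq ijkl => ->.
  by rewrite gram_row // (negbTE nlinked).
have [jl|jl] := eqVneq j l.
  by rewrite jl in nlinked *; rewrite gram_col // (negbTE nlinked).
have [oil|oil] := boolP (occ (i, l)); last by rewrite gram_cross_unoccupied ?oil ?(negbTE nlinked).
have [okj|okj] := boolP (occ (k, j)); last first.
  by rewrite gram_cross_unoccupied ?okj ?orbT ?(negbTE nlinked).
exact: gram_unlinked_cross.
Qed.

End Rigidity.

Definition conf_reps := E1 :|: [set e.1 | e in E2].

Lemma card_conf_reps : #|conf_reps| = (#|E1| + #|E2|)%N.
Proof.
have half1 e : half e.1 e by rewrite /half eqxx.
rewrite cardsU card_in_imset => [|e f He Hf /= ef]; last first.
  by apply: half_uniq He Hf (half1 e) _; rewrite ef.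
suff -> : E1 :&: [set e.1 | e in E2] = finset.set0 by rewrite cards0 subn0.
apply/setP => u; rewrite !inE; apply/andP => -[uE1 /imsetP [e He ue]].
by move: (half_notin_E1 He (half1 e)); rewrite -ue uE1.
Qed.

Lemma linked_conf_reps : {in conf_reps &, forall u v, linked u v = (u == v)}.
Proof.
have rep_half w e : w \in conf_reps -> e \in E2 -> half w e -> w = e.1.
  rewrite inE => /orP [wE1 He /(half_notin_E1 He)|/imsetP [f Hf ->] He hw].
    by rewrite wE1.
  by rewrite (half_uniq Hf He _ hw) // /half eqxx.
move=> u v ur vr; have [<-|uv] := eqVneq u v.
  rewrite linkedxx; case/setUP: ur => [uE1|/imsetP [e He ->]]; first by rewrite /occupied uE1.
  by apply: (occupied_half He); rewrite /half eqxx.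
apply/negbTE; rewrite (linked_two_edge uv); apply/negP => /orP [] He; case/eqP: uv.
  by rewrite [v](rep_half v _ vr He) // /half eqxx orbT.
by rewrite [u](rep_half u _ ur He) // /half eqxx orbT.
Qed.

Lemma conf_sos_rank_ge r : sos_with (gram_coeffs conf_forms) r -> (#|E1| + #|E2| <= r)%N.
Proof.
case=> c sos_c; rewrite -card_conf_reps.
apply: (orthonormal_card_le (w := fun u p => c p u.1 u.2)) => u v ur vr.
have sos_eq x y : sos_eval c x y = sos_eval conf_forms x y.
  by rewrite -[RHS]bq_eval_gram sos_c.
by rewrite -(linked_conf_reps ur vr) -(gram_rigid sos_eq).
Qed.

Lemma conf_le_BSR : (((#|E1| + #|E2|)%N%:R)%:E <= BSR R m n)%E.
Proof.
apply: le_trans (sos_rank_le_BSR (gram_is_sos conf_forms)).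
exact: sos_rank_ge conf_sos_rank_ge.
Qed.

End Configuration.

Section ZarankiewiczBounds.
Variables (m n : nat).
Local Notation conf := ({set cell m n} * {set cell m n * cell m n})%type.
Implicit Type E : {set cell m n}.

Lemma simple_conf_set0 E : simple_conf E finset.set0.
Proof. by apply/andP; split; apply/forall_inP => e; rewrite inE. Qed.

Lemma has_gen_C4_set0 E : has_gen_C4 E finset.set0 = has_C4 E.
Proof.
rewrite /has_gen_C4; have no_edge P : [exists e in finset.set0, P e] = false.
  by apply/existsP => -[e]; rewrite inE.
by rewrite !no_edge !orbF.
Qed.

Lemma has_C4_set0 : has_C4 (finset.set0 : {set cell m n}) = false.
Proof. by apply/existsP => -[i /existsP [k /existsP [j /existsP [l]]]]; rewrite inE !andbF. Qed.

Lemma z_le_z2 : (z m n <= z2 m n)%N.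
Proof.
apply/bigmax_leqP => E noC4; rewrite -[#|E|]addn0 -(cards0 (cell m n * cell m n)%type).
by apply: (leq_bigmax_cond (E, finset.set0)); rewrite /= simple_conf_set0 has_gen_C4_set0.
Qed.

Lemma z2_le_BSR (R : realType) : (((z2 m n)%:R)%:E <= BSR R m n)%E.
Proof.
pose valid := [pred G : conf | simple_conf G.1 G.2 && ~~ has_gen_C4 G.1 G.2].
have : (0 < #|valid|)%N.
  apply/card_gt0P; exists (finset.set0, finset.set0).
  by rewrite inE /= simple_conf_set0 has_gen_C4_set0 has_C4_set0.
case/(eq_bigmax_cond (fun G : conf => #|G.1| + #|G.2|)%N) => G.
by rewrite inE /z2 => /andP [simple free] ->; apply: conf_le_BSR.
Qed.

End ZarankiewiczBounds.

Theorem theorem2p2 (R : realType) (m n : nat) (hm : (2 <= m)%N) (hn : (2 <= n)%N) :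
  (((z2 m n)%:R)%:E <= BSR R m n)%E /\ (z m n <= z2 m n)%N.
Proof.
(* Both bounds hold for all m and n. *)
by split; [exact: z2_le_BSR | exact: z_le_z2].
Qed.
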